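(* Let $n\in\mathbb{N}$, set $p_{2n}=\frac12\left(1-\tan^2\left(\frac{\pi}{4n}\right)\right)$ and $H=K_{2n}$. Then for all $p\in[p_{2n},1]$, \[\min\left\{\mathbb{P}\left[|C_1(\mathbf{H}_\mu)|>n\right]:\ \mu\in\mathcal{M}_{1,\geq p}(K_{2n})\right\}=1-\binom{2n}{n}\left(\frac{1-p}{2}\right)^n.\]
   Context: $K_{2n}$ is the complete graph on $2n$ vertices. A random graph model on $H$ is a probability measure $\mu$ on subsets of $E(H)$, and $\mathbf{H}_\mu$ is the random spanning subgraph of $H$ with edge set distributed according to $\mu$. $\mu$ is $1$-independent if for all sets $A,B\subseteq E(H)$ whose edges span disjoint vertex sets, $E(\mathbf{H}_\mu)\cap A$ and $E(\mathbf{H}_\mu)\cap B$ are independent. $\mathcal{M}_{1,\geq p}(H)$ is the set of $1$-independent measures on $H$ in which each edge is present with probability at least $p$. $C_1(F)$ denotes a largest connected component of the spanning subgraph $(V(H),F)$, and $|C_1|$ its number of vertices. *)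

From HB Require Import structures.
From mathcomp Require Import all_boot all_order all_algebra.
From mathcomp Require Import reals trigo.
Set Implicit Arguments.
Unset Strict Implicit.
Unset Printing Implicit Defensive.
Import Order.TTheory GRing.Theory Num.Theory.
Local Open Scope ring_scope.

Section Graphs.
Variable T : finType.

(* Edges of the complete graph K_T: the 2-element subsets of T. *)
Definition edge := {e : {set T} | #|e| == 2%N}.

Definition adj (F : {set edge}) : rel T :=
  fun x y => [exists e in F, val e == [set x; y]].

Definition comp_size (F : {set edge}) (x : T) : nat :=
  #|[set y | connect (adj F) x y]|.

Definition C1size (F : {set edge}) : nat := \max_(x : T) comp_size F x.

Definition vspan (A : {set edge}) : {set T} := \bigcup_(e in A) val e.

Variable R : realType.

(* a random graph model: probability mass function on edge sets *)
Definition is_prob (mu : {ffun {set edge} -> R}) : Prop :=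
  (forall F, 0 <= mu F) /\ \sum_(F : {set edge}) mu F = 1.

Definition Pr (mu : {ffun {set edge} -> R}) (Q : pred {set edge}) : R :=
  \sum_(F : {set edge} | Q F) mu F.

Definition one_indep (mu : {ffun {set edge} -> R}) : Prop :=
  forall A B : {set edge}, [disjoint vspan A & vspan B] ->
  forall S S' : {set edge},
    Pr mu [pred F : {set edge} | (F :&: A == S) && (F :&: B == S')] =
    Pr mu [pred F : {set edge} | F :&: A == S] * Pr mu [pred F : {set edge} | F :&: B == S'].

Definition M1ge (p : R) (mu : {ffun {set edge} -> R}) : Prop :=
  [/\ is_prob mu, one_indep mu & forall e : edge, p <= Pr mu [pred F : {set edge} | e \in F]].

End Graphs.

From HB Require Import structures.
From mathcomp Require Import all_boot all_order all_algebra.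
From mathcomp Require Import reals trigo complex.
From mathcomp Require Import zify ring lra.
Import Order.TTheory GRing.Theory Num.Theory.
Set Implicit Arguments.
Unset Strict Implicit.
Unset Printing Implicit Defensive.

(* Count the ways to list [n] disjoint ordered pairs of
   non-adjacent vertices of [F] covering all [2n] vertices.  When every
   component of [F] has at most [n] vertices there are at least [2^n n!^2]
   of them: with [k] pairs left, the first vertex of the next pair can be any
   of the [2k] remaining ones, and it has at least [k] partners outside its
   component whose removal leaves components of at most [k - 1] remaining
   vertices.  Since the pairs are disjoint, 1-independence bounds the
   probability that a fixed list consists of non-edges by [(1 - p)^n], so by
   Markov's inequality [P(|C_1| <= n) 2^n n!^2 <= (2n)! (1 - p)^n].

   Give every vertex independently a neutral state of weight
   [c] or a sign of weight [r e^{i th}] or [r e^{-i th}], with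
   [c + 2 r cos th = 1], and delete exactly the edges between opposite signs.
   The real part of this complex measure is a probability when
   [2n th <= pi/2].  Flipping all signs conjugates the weights and fixes the
   graph, so the measure of any event is real; products of local events then
   factor, which gives 1-independence.  An edge is deleted with probability
   [2 r^2], and [|C_1| <= n] exactly for the [C(2n, n)] balanced sign
   patterns, each of weight [r^(2n)].  The choice [th = pi/(4n)],
   [r^2 = (1 - p)/2] is admissible exactly when [p >= p_2n]. *)

Section ComponentsWithin.
Variable T : finType.
Implicit Types (F : {set edge T}) (X Y : {set T}) (x y z : T).

Lemma adj_sym F : symmetric (adj F).
Proof. by move=> x y; apply/existsP/existsP=> -[e He]; exists e; rewrite setUC. Qed.

Lemma connect_adj_sym F : connect_sym (adj F).
Proof. exact/sym_connect_sym/adj_sym. Qed.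

Definition comp_in F X x := [set y in X | connect (adj F) x y].

Lemma comp_in_sub F X x : comp_in F X x \subset X.
Proof. by apply/subsetP=> y; rewrite inE => /andP[]. Qed.

Lemma comp_in_self F X x : x \in X -> x \in comp_in F X x.
Proof. by rewrite inE connect0 andbT. Qed.

Lemma eq_comp_in F X x y : connect (adj F) x y -> comp_in F X x = comp_in F X y.
Proof.
by move=> cxy; apply/setP=> u; rewrite !inE (same_connect (connect_adj_sym F) cxy).
Qed.

Lemma disjoint_comp_in F X x y :
  ~~ connect (adj F) x y -> [disjoint comp_in F X x & comp_in F X y].
Proof.
move=> nxy; apply/pred0P=> u /=; rewrite !inE.
apply/negP=> /andP[/andP[_ cxu] /andP[_ cyu]]; case/negP: nxy.
by apply: connect_trans cxu _; rewrite connect_adj_sym.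
Qed.

Lemma subset_comp_in F X Y x : Y \subset X -> comp_in F Y x \subset comp_in F X x.
Proof.
by move=> sYX; apply/subsetP=> u; rewrite !inE => /andP[/(subsetP sYX) -> ->].
Qed.

Lemma card_comp_in_setD F X Y x u : Y \subset X ->
  u \in comp_in F X x -> u \notin Y -> #|comp_in F Y x| < #|comp_in F X x|.
Proof.
move=> sYX uX uY; apply/proper_card/properP; split; first exact: subset_comp_in.
by exists u; rewrite // inE (negbTE uY).
Qed.

Definition small_comps F X k := [forall z, #|comp_in F X z| <= k].

End ComponentsWithin.

Section Partners.
Variables (T : finType) (F : {set edge T}) (X : {set T}) (k : nat) (v : T).
Hypotheses (vX : v \in X) (card_X : #|X| = k.+1.*2) (small_X : small_comps F X k.+1).

Definition partners := [set w in X |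
  [&& w != v, ~~ connect (adj F) v w & small_comps F (X :\ v :\ w) k]].

(* Removing [v] and [w] shrinks every component that meets them. *)
Lemma small_comps_setD2 w :
  (forall z, v \notin comp_in F X z -> w \notin comp_in F X z -> #|comp_in F X z| <= k) ->
  small_comps F (X :\ v :\ w) k.
Proof.
move=> small_rest; apply/forallP=> z.
have sub : X :\ v :\ w \subset X by rewrite setDDl subsetDl.
have lt_rest u : u \in [set v; w] -> u \in comp_in F X z -> #|comp_in F (X :\ v :\ w) z| <= k.
  move=> uvw uz; rewrite -ltnS; apply: leq_trans (forallP small_X z).
  by apply: card_comp_in_setD sub uz _; rewrite setDDl inE uvw.
case: (boolP (v \in comp_in F X z)) => [|vz]; first by apply: lt_rest; rewrite !inE eqxx.
case: (boolP (w \in comp_in F X z)) => [|wz]; first by apply: lt_rest; rewrite !inE eqxx orbT.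
by apply: leq_trans (small_rest z vz wz); apply/subset_leq_card/subset_comp_in.
Qed.

Lemma partnersP w : w \in X -> ~~ connect (adj F) v w ->
  (forall z, v \notin comp_in F X z -> w \notin comp_in F X z -> #|comp_in F X z| <= k) ->
  w \in partners.
Proof.
move=> wX nvw small_rest; rewrite inE wX nvw small_comps_setD2 // !andbT.
by apply: contraNneq nvw => ->; apply: connect0.
Qed.

(* A full component avoiding [v] leaves too little room for another full one. *)
Lemma full_comp_sub_partners x : x \in X -> ~~ connect (adj F) v x ->
  #|comp_in F X x| = k.+1 -> comp_in F X x \subset partners.
Proof.
move=> xX nvx full_x; apply/subsetP=> w wx.
have [wX cxw] : w \in X /\ connect (adj F) x w by move: wx; rewrite inE => /andP[].
have nvw : ~~ connect (adj F) v w.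
  by apply: contra nvx => cvw; apply: connect_trans cvw _; rewrite connect_adj_sym.
apply: partnersP => // z vz wz.
have nzv : ~~ connect (adj F) z v by apply: contra vz => czv; rewrite inE vX.
have nzx : ~~ connect (adj F) z x.
  by apply: contra wz => czx; rewrite inE wX (connect_trans czx cxw).
have three : #|comp_in F X z :|: comp_in F X v :|: comp_in F X x| <= k.+1.*2.
  by rewrite -card_X; apply/subset_leq_card; rewrite !subUset !comp_in_sub.
rewrite !cardsU (disjoint_setI0 (disjoint_comp_in X nzv)) setIUl in three.
rewrite (disjoint_setI0 (disjoint_comp_in X nzx)) in three.
rewrite (disjoint_setI0 (disjoint_comp_in X nvx)) setU0 !cards0 !subn0 in three.
have : 0 < #|comp_in F X v| by apply/card_gt0P; exists v; apply: comp_in_self.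
by lia.
Qed.

Lemma setD_comp_sub_partners :
  (forall y, y \in X -> ~~ connect (adj F) v y -> #|comp_in F X y| <= k) ->
  X :\: comp_in F X v \subset partners.
Proof.
move=> small_y; apply/subsetP=> w; rewrite in_setD => /andP[nvw wX].
rewrite inE wX /= in nvw; apply: partnersP => // z vz _.
have [->|[y yz]] := set_0Vmem (comp_in F X z); first by rewrite cards0.
have [yX czy] : y \in X /\ connect (adj F) z y by move: yz; rewrite inE => /andP[].
rewrite (eq_comp_in X czy); apply: small_y yX _.
apply: contra vz => cvy; rewrite inE vX /=.
by apply: connect_trans czy _; rewrite connect_adj_sym.
Qed.

Lemma card_partners : k.+1 <= #|partners|.
Proof.
case: (boolP [exists x in X, ~~ connect (adj F) v x && (#|comp_in F X x| == k.+1)]).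
  case/exists_inP=> x xX /andP[nvx /eqP full_x].
  by rewrite -full_x; apply/subset_leq_card/full_comp_sub_partners.
move=> no_full; apply: leq_trans (subset_leq_card (setD_comp_sub_partners _)).
  have := cardsID (comp_in F X v) X; rewrite (setIidPr (comp_in_sub _ _ _)).
  by have := forallP small_X v; lia.
move=> y yX nvy; move: (forallP small_X y); rewrite leq_eqVlt ltnS => /orP[/eqP full_y|//].
by case/negP: no_full; apply/exists_inP; exists y; rewrite // nvy full_y eqxx.
Qed.

End Partners.

Section Pairings.
Variable T : finType.
Implicit Types (F : {set edge T}) (X : {set T}).

Fixpoint pairings F k X : nat :=
  if k is k'.+1 then
    \sum_(v in X) \sum_(w in X :\ v) (~~ adj F v w) * pairings F k' (X :\ v :\ w)
  else 1.

Lemma pairings_lb F k X : #|X| = k.*2 -> small_comps F X k ->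
  2 ^ k * k`! ^ 2 <= pairings F k X.
Proof.
elim: k X => [//|k IH] X card_X small_X /=.
have row v : v \in X ->
    2 ^ k * k`! ^ 2 * k.+1 <= \sum_(w in X :\ v) (~~ adj F v w) * pairings F k (X :\ v :\ w).
  move=> vX; apply: leq_trans (leq_mul (leqnn _) (card_partners vX card_X small_X)) _.
  rewrite mulnC -sum_nat_const big_mkcond [leqRHS]big_mkcond; apply: leq_sum => w _.
  rewrite inE; case: (boolP (_ && _)) => // /andP[wX /and3P[wv nvw small_vw]].
  rewrite in_setD1 wX wv /= (_ : ~~ adj F v w) ?mul1n; last by apply: contra nvw => /connect1.
  apply: IH small_vw.
  by move: card_X; rewrite (cardsD1 v X) vX (cardsD1 w (X :\ v)) !inE wv wX /=; lia.
apply: (@leq_trans (\sum_(v in X) 2 ^ k * k`! ^ 2 * k.+1)); last exact: leq_sum.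
rewrite sum_nat_const card_X factS expnS -!mul2n; apply: eq_leq; ring.
Qed.

End Pairings.

Lemma small_comps_C1size (T : finType) (F : {set edge T}) n :
  C1size F <= n -> small_comps F setT n.
Proof.
move=> hC; apply/forallP=> z; apply: leq_trans hC.
apply: leq_trans (leq_bigmax (F := comp_size F) z).
by apply/subset_leq_card/subsetP=> y; rewrite !inE.
Qed.

Section EdgesWithin.
Variable T : finType.
Implicit Types (F : {set edge T}) (X Y : {set T}) (v w : T).

Definition edges_in X := [set e : edge T | val e \subset X].

Lemma vspan_edges_in X : vspan (edges_in X) \subset X.
Proof. by apply/bigcupsP=> e; rewrite inE. Qed.

Lemma adj_edges_in F X v w : v \in X -> w \in X ->
  adj (F :&: edges_in X) v w = adj F v w.
Proof.
move=> vX wX; apply/existsP/existsP=> -[e /andP[eF /eqP ev]]; exists e.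
  by move: eF; rewrite inE ev eqxx => /andP[->].
rewrite !inE eF ev eqxx andbT; apply/subsetP=> z; rewrite !inE.
by case/orP=> /eqP ->.
Qed.

Lemma pairings_edges_in F k X Y : X \subset Y ->
  pairings (F :&: edges_in Y) k X = pairings F k X.
Proof.
elim: k X => [//|k IH] X sXY /=.
apply: eq_bigr => v vX; apply: eq_bigr => w /setD1P[_ wX].
rewrite adj_edges_in ?(subsetP sXY) // IH //.
by apply: subset_trans sXY; rewrite setDDl subsetDl.
Qed.

Lemma card_pair_edge v w : v != w -> #|[set v; w]| == 2.
Proof. by rewrite cards2 => ->. Qed.

Definition pair_edge v w (vw : v != w) : edge T :=
  exist (fun e : {set T} => #|e| == 2) [set v; w] (card_pair_edge vw).

Lemma adj_pair_edge F v w (vw : v != w) : adj F v w = (pair_edge vw \in F).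
Proof.
apply/existsP/idP=> [[e /andP[eF /eqP ev]]|eF]; last by exists (pair_edge vw); rewrite eF /=.
by rewrite (_ : pair_edge vw = e) //; apply: val_inj; rewrite /= ev.
Qed.

End EdgesWithin.

Local Open Scope ring_scope.

Section Expectation.
Variables (T : finType) (R : realType).
Implicit Types (mu : {ffun {set edge T} -> R}) (A B F S : {set edge T}) (f g : {set edge T} -> R).

Definition expect mu f := \sum_F mu F * f F.

Lemma eq_expect mu f g : f =1 g -> expect mu f = expect mu g.
Proof. by move=> fg; apply: eq_bigr => F _; rewrite fg. Qed.

Lemma expect_ge0 mu f : is_prob mu -> (forall F, 0 <= f F) -> 0 <= expect mu f.
Proof. by move=> [mu_ge0 _] f_ge0; apply: sumr_ge0 => F _; rewrite mulr_ge0. Qed.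

Lemma expect_cst mu a : is_prob mu -> expect mu (fun=> a) = a.
Proof. by move=> [_ mu1]; rewrite /expect -mulr_suml mu1 mul1r. Qed.

Lemma expect_sum (I : finType) (P : pred I) mu (f : I -> {set edge T} -> R) :
  expect mu (fun F => \sum_(i | P i) f i F) = \sum_(i | P i) expect mu (f i).
Proof.
by rewrite /expect exchange_big; apply: eq_bigr => F _; rewrite mulr_sumr.
Qed.

Lemma expect_indicator mu (Q : pred {set edge T}) : expect mu (fun F => (Q F)%:R) = Pr mu Q.
Proof. by rewrite /Pr big_mkcond; apply: eq_bigr => F _; case: (Q F); rewrite ?mulr1 ?mulr0. Qed.

Lemma Pr_predC mu (Q : pred {set edge T}) : is_prob mu ->
  Pr mu [pred F | ~~ Q F] = 1 - Pr mu Q.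
Proof. by move=> [_ mu1]; rewrite -mu1 (bigID Q) /= addrC addrK. Qed.

Lemma Pr_le_expect mu (Q : pred {set edge T}) f a : is_prob mu ->
  (forall F, 0 <= f F) -> (forall F, Q F -> a <= f F) -> Pr mu Q * a <= expect mu f.
Proof.
move=> [mu_ge0 _] f_ge0 Qf; rewrite /Pr mulr_suml /expect [leRHS](bigID Q) /= -[leLHS]addr0.
apply: lerD; first by apply: ler_sum => F QF; apply: ler_wpM2l; rewrite ?Qf.
by apply: sumr_ge0 => F _; rewrite mulr_ge0.
Qed.

Lemma expect_restrict mu A (h : {set edge T} -> R) :
  expect mu (fun F => h (F :&: A)) = \sum_S h S * Pr mu [pred F | F :&: A == S].
Proof.
rewrite /expect (partition_big (fun F => F :&: A) xpredT) //=.
apply: eq_bigr => S _; rewrite /Pr mulr_sumr.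
by apply: eq_bigr => F /eqP <-; rewrite mulrC.
Qed.

Lemma expect_indep mu A B f g : one_indep mu -> [disjoint vspan A & vspan B] ->
  expect mu (fun F => f (F :&: A) * g (F :&: B)) =
  expect mu (fun F => f (F :&: A)) * expect mu (fun F => g (F :&: B)).
Proof.
move=> indep dAB; rewrite !expect_restrict mulr_suml.
under [RHS]eq_bigr => S _ do rewrite mulr_sumr.
rewrite /expect (partition_big (fun F => (F :&: A, F :&: B)) xpredT) //= [RHS]pair_bigA /=.
apply: eq_bigr => -[S S'] _ /=; rewrite mulrACA -(indep A B dAB S S') /Pr mulr_sumr.
apply: eq_big => F; rewrite xpair_eqE // => /andP[/eqP <- /eqP <-].
by rewrite mulrC.
Qed.

End Expectation.

Section LowerBound.
Variables (T : finType) (R : realType) (p : R) (mu : {ffun {set edge T} -> R}).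
Hypothesis mu_M1ge : M1ge p mu.

Let mu_prob : is_prob mu. Proof. by case: mu_M1ge. Qed.

Lemma expect_nonadj_le v w : v != w -> expect mu (fun F => (~~ adj F v w)%:R) <= 1 - p.
Proof.
move=> vw; have [_ _ edge_ge] := mu_M1ge.
rewrite (eq_expect _ (g := fun F => (~~ (pair_edge vw \in F))%:R)); last first.
  by move=> F; rewrite adj_pair_edge.
by rewrite expect_indicator Pr_predC // lerD2l lerN2 edge_ge.
Qed.

Lemma expect_nonadj_pairings v w k (Y : {set T}) : v \notin Y -> w \notin Y ->
  expect mu (fun F => (~~ adj F v w)%:R * (pairings F k Y)%:R) =
  expect mu (fun F => (~~ adj F v w)%:R) * expect mu (fun F => (pairings F k Y)%:R).
Proof.
move=> vY wY; have [_ indep _] := mu_M1ge.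
have vin : v \in [set v; w] by rewrite !inE eqxx.
have win : w \in [set v; w] by rewrite !inE eqxx orbT.
pose fvw S := (~~ adj S v w)%:R : R; pose gY S := (pairings S k Y)%:R : R.
transitivity (expect mu (fun F => fvw (F :&: edges_in [set v; w]) * gY (F :&: edges_in Y))).
  by apply: eq_expect => F; rewrite /fvw /gY adj_edges_in // pairings_edges_in.
rewrite expect_indep //; last first.
  apply: disjointW (vspan_edges_in _) (vspan_edges_in _) _.
  rewrite disjoint_subset; apply/subsetP=> z; rewrite !inE.
  by case/orP=> /eqP->.
by congr (_ * _); apply: eq_expect => F; rewrite /fvw /gY ?adj_edges_in ?pairings_edges_in.
Qed.

Lemma expect_pairings_le k (X : {set T}) : #|X| = k.*2 ->
  expect mu (fun F => (pairings F k X)%:R) <= (k.*2)`!%:R * (1 - p) ^+ k.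
Proof.
elim: k X => [|k IH] X card_X.
  by rewrite expect_cst ?expr0 ?mulr1.
pose b := (k.*2)`!%:R * (1 - p) ^+ k.
have term v w : v \in X -> w \in X :\ v ->
    expect mu (fun F => (~~ adj F v w)%:R * (pairings F k (X :\ v :\ w))%:R) <= (1 - p) * b.
  move=> vX /setD1P[wv wX]; rewrite expect_nonadj_pairings ?inE ?eqxx ?andbF //.
  apply: ler_pM; rewrite ?expect_ge0 // ?expect_nonadj_le 1?eq_sym //.
  by apply: IH; move: card_X; rewrite (cardsD1 v X) vX (cardsD1 w (X :\ v)) !inE wv wX /=; lia.
have total : \sum_(v in X) \sum_(w in X :\ v) (1 - p) * b = (k.+1).*2`!%:R * (1 - p) ^+ k.+1.
  rewrite (eq_bigr (fun=> (1 - p) * b *+ (k.*2).+1)) => [|v vX]; last first.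
    by rewrite sumr_const; congr (_ *+ _); move: card_X; rewrite (cardsD1 v X) vX; lia.
  rewrite sumr_const card_X /b doubleS !factS -!mulrnA exprS !natrM; ring.
rewrite -total (eq_expect _ (g := fun F => \sum_(v in X) \sum_(w in X :\ v)
  (~~ adj F v w)%:R * (pairings F k (X :\ v :\ w))%:R)); last first.
  move=> F /=; rewrite natr_sum; apply: eq_bigr => v _.
  by rewrite natr_sum; apply: eq_bigr => w _; rewrite natrM.
rewrite expect_sum; apply: ler_sum => v vX; rewrite expect_sum.
by apply: ler_sum => w; apply: term.
Qed.

Lemma lower_bound n : #|T| = n.*2 ->
  1 - 'C(n.*2, n)%:R * ((1 - p) / 2) ^+ n <= Pr mu [pred F | (n < C1size F)%N].
Proof.
move=> card_T; pose a : R := (2 ^ n * n`! ^ 2)%:R.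
have a_gt0 : 0 < a by rewrite ltr0n muln_gt0 expn_gt0 /= expn_gt0 fact_gt0.
have markov : Pr mu [pred F | ~~ (n < C1size F)%N] * a <= (n.*2)`!%:R * (1 - p) ^+ n.
  apply: le_trans (expect_pairings_le (X := setT) _); last by rewrite cardsT.
  apply: Pr_le_expect => // F; rewrite /= -leqNgt ler_nat => small.
  by apply: pairings_lb; rewrite ?cardsT ?small_comps_C1size.
have binom : (n.*2)`!%:R * (1 - p) ^+ n / a = 'C(n.*2, n)%:R * ((1 - p) / 2) ^+ n.
  have := bin_fact (leq_addr n n); rewrite addnK addnn => <-.
  rewrite /a !natrM natrX expr_div_n; field.
  by rewrite expf_neq0 // pnatr_eq0 gtn_eqF ?fact_gt0.
rewrite lerBlDr addrC -lerBlDr -Pr_predC // -binom ler_pdivlMr //.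
Qed.

End LowerBound.

Section ProductWeight.
Variables (T S : finType) (K : comNzRingType) (om : S -> K).
Hypothesis om_sum1 : \sum_x om x = 1.
Implicit Types (s t : {ffun T -> S}) (g h : {ffun T -> S} -> K).

Definition weight s : K := \prod_v om (s v).

Definition wexpect g : K := \sum_s g s * weight s.

Lemma eq_wexpect g h : g =1 h -> wexpect g = wexpect h.
Proof. by move=> gh; apply: eq_bigr => s _; rewrite gh. Qed.

Lemma wexpectD g h : wexpect (fun s => g s + h s) = wexpect g + wexpect h.
Proof. by rewrite /wexpect -big_split; apply: eq_bigr => s _; rewrite mulrDl. Qed.

Lemma sum_weight : \sum_s weight s = 1.
Proof. by rewrite -(bigA_distr_bigA (fun _ => om)) big1 // => v _; rewrite om_sum1. Qed.

Lemma wexpect1 : wexpect (fun=> 1) = 1.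
Proof. by rewrite /wexpect -[RHS]sum_weight; apply: eq_bigr => s _; rewrite mul1r. Qed.

Definition patch (D : {set T}) s t : {ffun T -> S} := [ffun v => if v \in D then s v else t v].

(* Swapping the parts of [s] and [t] outside [D] preserves the total weight of
   the pair, which decouples a function of the [D]-part from one of the rest. *)
Lemma wexpect_indep (D : {set T}) g h :
  (forall s t, {in D, s =1 t} -> g s = g t) ->
  (forall s t, {in [predC D], s =1 t} -> h s = h t) ->
  wexpect (fun s => g s * h s) = wexpect g * wexpect h.
Proof.
move=> g_loc h_loc; rewrite /wexpect mulr_suml.
under [RHS]eq_bigr => s _ do rewrite mulr_sumr.
rewrite [RHS]pair_bigA /=.
pose swap st := (patch D st.1 st.2, patch D st.2 st.1).
have swapK : involutive swap.
  by move=> [s t]; congr (_, _); apply/ffunP=> v; rewrite !ffunE; case: (v \in D).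
rewrite (reindex_inj (inv_inj swapK)) /=.
transitivity (\sum_s \sum_t g s * h s * weight s * weight t).
  by apply: eq_bigr => s _; rewrite -mulr_sumr sum_weight mulr1.
rewrite pair_bigA /=; apply: eq_bigr => -[s t] _ /=.
rewrite (g_loc (patch D s t) s) => [|v vD]; last by rewrite ffunE vD.
rewrite (h_loc (patch D t s) s) => [|v vD]; last by rewrite ffunE (negbTE vD).
have swap_weight : weight (patch D s t) * weight (patch D t s) = weight s * weight t.
  rewrite /weight -!big_split /=; apply: eq_bigr => v _; rewrite !ffunE.
  by case: (v \in D); rewrite // mulrC.
by rewrite [RHS]mulrACA swap_weight mulrA.
Qed.

Lemma wexpect_eval (x : T) (a : S) : wexpect (fun s => (s x == a)%:R) = om a.
Proof.
pose G v u := if v == x then (u == a)%:R * om u else om u.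
transitivity (\sum_(s : {ffun T -> S}) \prod_v G v (s v)).
  apply: eq_bigr => s _; rewrite /weight (bigD1 x) //= [RHS](bigD1 x) //= /G eqxx mulrA.
  by congr (_ * _); apply: eq_bigr => v /negbTE ->.
rewrite -(bigA_distr_bigA G) (bigD1 x) //= [X in _ * X]big1 ?mulr1; last first.
  by move=> v /negbTE vx; rewrite /G vx om_sum1.
rewrite /G eqxx (bigD1 a) //= eqxx mul1r big1 ?addr0 //.
by move=> u /negbTE ->; rewrite mul0r.
Qed.

Lemma wexpect_eval2 (x y : T) (a b : S) : x != y ->
  wexpect (fun s => (s x == a)%:R * (s y == b)%:R) = om a * om b.
Proof.
move=> xy; rewrite (wexpect_indep (D := [set x])) ?wexpect_eval // => s t st.
  by rewrite st // inE.
by rewrite st // !inE eq_sym.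
Qed.

End ProductWeight.

Lemma sum_option (V : nmodType) (I : finType) (f : option I -> V) :
  \sum_x f x = f None + \sum_i f (Some i).
Proof.
rewrite (bigD1 None) //= (reindex_omap Some id) => [|[]//].
by congr (_ + _); apply: eq_bigl => i; rewrite eqxx.
Qed.

Local Notation Re := complex.Re.
Local Notation Im := complex.Im.

Section PolarForm.
Variable R : realType.
Local Open Scope complex_scope.
Implicit Types (x y : R[i]) (a t : R).

Lemma ReD x y : Re (x + y) = Re x + Re y. Proof. by case: x; case: y. Qed.

Lemma ReM x y : Re (x * y) = Re x * Re y - Im x * Im y. Proof. by case: x; case: y. Qed.

Lemma Re_sum (I : finType) (P : pred I) (f : I -> R[i]) :
  Re (\sum_(i | P i) f i) = \sum_(i | P i) Re (f i).
Proof. exact: (big_morph _ ReD). Qed.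

Lemma Re_realM a x : Re (a%:C * x) = a * Re x. Proof. by case: x => u v /=; ring. Qed.

Lemma Re_natM (b : bool) x : Re (b%:R * x) = if b then Re x else 0.
Proof. by case: b; rewrite ?mul1r ?mul0r. Qed.

Lemma Im_conjc_id x : x^* = x -> Im x = 0.
Proof. by case: x => u v [] h /=; lra. Qed.

Definition expi t : R[i] := cos t +i* sin t.

Lemma expiD a t : expi (a + t) = expi a * expi t.
Proof. by rewrite /expi cosD sinD; congr (_ +i* _); ring. Qed.

Lemma expi0 : expi 0 = 1. Proof. by rewrite /expi cos0 sin0. Qed.

Lemma conjc_polar a t : (a%:C * expi t)^* = a%:C * expi (- t).
Proof. by rewrite /expi /= cosN sinN; congr (_ +i* _); ring. Qed.

Lemma Re_expi t : Re (expi t) = cos t. Proof. by []. Qed.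

Lemma prod_polar (I : finType) (f g : I -> R) :
  \prod_i ((f i)%:C * expi (g i)) = (\prod_i f i)%:C * expi (\sum_i g i).
Proof.
rewrite big_split /= rmorph_prod; congr (_ * _).
by rewrite (big_morph _ expiD expi0).
Qed.

End PolarForm.

Section SignModel.
Local Open Scope complex_scope.
Variables (R : realType) (T : finType) (r c th : R).
Hypotheses (r_ge0 : 0 <= r) (c_ge0 : 0 <= c) (rc_sum1 : r * cos th *+ 2 + c = 1).
Hypotheses (th_ge0 : 0 <= th) (th_small : th * #|T|%:R <= pi / 2).
Local Notation state := {ffun T -> option bool}.
Implicit Types (s t : state) (F : {set edge T}) (x y : T).

Definition modulus (a : option bool) : R := if a is None then c else r.

Definition charge (a : option bool) : R := if a is Some b then (if b then 1 else -1) else 0.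

Definition vweight (a : option bool) : R[i] := (modulus a)%:C * expi (th * charge a).

Lemma vweight_negb a : vweight (omap negb a) = (vweight a)^*.
Proof.
rewrite /vweight conjc_polar -mulrN.
by case: a => [[]|] //=; rewrite ?opprK ?oppr0.
Qed.

Lemma vweight_sum1 : \sum_a vweight a = 1.
Proof.
rewrite sum_option big_bool /= -[vweight (Some false)]/(vweight (omap negb (Some true))).
rewrite vweight_negb addcJ /vweight /= mulr0 mulr1 expi0 mulr1 mul0r subr0.
by rewrite -[RHS]/((1 : R)%:C) -rc_sum1 rmorphD rmorphMn /= mulr_natl addrC.
Qed.

Lemma vweight_opposite b : vweight (Some b) * vweight (Some (~~ b)) = (r ^+ 2)%:C.
Proof.
rewrite /vweight /= mulrACA -rmorphM -expiD.
by case: b; rewrite /= ?mulrN1 ?mulr1 ?addrN ?addNr expi0 mulr1.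
Qed.

Lemma weight_polar s :
  weight vweight s = (\prod_v modulus (s v))%:C * expi (th * \sum_v charge (s v)).
Proof. by rewrite /weight /vweight prod_polar mulr_sumr. Qed.

(* The total charge is at most [#|T|] in absolute value, so [th] keeps the
   argument of every weight in [[-pi/2, pi/2]]. *)
Lemma Re_weight_ge0 s : 0 <= Re (weight vweight s).
Proof.
rewrite weight_polar Re_realM Re_expi; apply: mulr_ge0.
  by apply: prodr_ge0 => v _; case: (s v).
apply: cos_ge0_pihalf; rewrite -ler_norml normrM (ger0_norm th_ge0).
apply: le_trans th_small; apply: ler_wpM2l => //.
apply: le_trans (ler_norm_sum _ _ _) _.
rewrite -sum1_card natr_sum; apply: ler_sum => v _.
by case: (s v) => [[]|] /=; rewrite ?normrN ?normr0 ?normr1 ?ler01.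
Qed.

Definition flip s : state := [ffun v => omap negb (s v)].

Lemma flipK : involutive flip.
Proof. by move=> s; apply/ffunP=> v; rewrite !ffunE; case: (s v) => [[]|]. Qed.

Lemma weight_flip s : weight vweight (flip s) = (weight vweight s)^*.
Proof. by rewrite /weight rmorph_prod /=; apply: eq_bigr => v _; rewrite ffunE vweight_negb. Qed.

Lemma Im_wexpect_flip (P : pred state) : (forall s, P (flip s) = P s) ->
  Im (wexpect vweight (fun s => (P s)%:R)) = 0.
Proof.
move=> P_flip; apply: Im_conjc_id.
rewrite /wexpect rmorph_sum (reindex_inj (inv_inj flipK)) /=.
by apply: eq_bigr => s _; rewrite rmorphM rmorph_nat /= weight_flip conjcK P_flip.
Qed.

Definition opposite (a b : option bool) :=
  if a is Some u then (if b is Some w then u != w else false) else false.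

Definition graph s : {set edge T} :=
  [set e : edge T | [forall x in val e, forall y in val e, ~~ opposite (s x) (s y)]].

Lemma in_graph s (e : edge T) x y : val e = [set x; y] ->
  (e \in graph s) = ~~ opposite (s x) (s y).
Proof.
have opp_sym a b : opposite a b = opposite b a by case: a => [[]|]; case: b => [[]|].
have opp_irr a : opposite a a = false by case: a => [[]|].
move=> ev; rewrite inE ev; apply/forallP/idP=> [all_xy|no_xy u].
  by move: (all_xy x); rewrite !inE eqxx => /forallP /(_ y); rewrite !inE eqxx orbT.
apply/implyP; rewrite !inE => /orP[]/eqP->; apply/forallP=> z;
  by apply/implyP; rewrite !inE => /orP[]/eqP->; rewrite ?opp_irr // opp_sym.
Qed.

Lemma adj_graph s x y : adj (graph s) x y = (x != y) && ~~ opposite (s x) (s y).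
Proof.
case: (eqVneq x y) => [<-|xy].
  apply/negbTE/negP=> /exists_inP[e _ /eqP ex].
  by move: (valP e); rewrite ex setUid cards1.
by rewrite adj_pair_edge (in_graph s (e := pair_edge xy) (x := x) (y := y)).
Qed.

Lemma connect_graph s x y : ~~ opposite (s x) (s y) -> connect (adj (graph s)) x y.
Proof.
case: (eqVneq x y) => [->|xy] nxy; first exact: connect0.
by apply: connect1; rewrite adj_graph xy.
Qed.

Lemma graph_flip s : graph (flip s) = graph s.
Proof.
apply/setP=> e; rewrite !inE; apply: eq_forallb_in => x _; apply: eq_forallb_in => y _.
by rewrite !ffunE; case: (s x) => [[]|]; case: (s y) => [[]|].
Qed.

Lemma graph_restrict s t (A : {set edge T}) : {in vspan A, s =1 t} ->
  graph s :&: A = graph t :&: A.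
Proof.
move=> st; apply/setP=> e; rewrite !inE; case eA: (e \in A); rewrite ?andbF ?andbT //.
have sub : val e \subset vspan A by apply: bigcup_sup eA.
apply: eq_forallb_in => x xe; apply: eq_forallb_in => y ye.
by rewrite !st // (subsetP sub).
Qed.

Definition model : {ffun {set edge T} -> R} :=
  [ffun F => Re (wexpect vweight (fun s => (graph s == F)%:R))].

Lemma Pr_model (Q : pred {set edge T}) :
  Pr model Q = Re (wexpect vweight (fun s => (Q (graph s))%:R)).
Proof.
rewrite /Pr; under eq_bigr do rewrite ffunE.
rewrite -Re_sum /wexpect exchange_big /=; congr Re; apply: eq_bigr => s _.
rewrite -mulr_suml; congr (_ * _).
rewrite big_mkcond (bigD1 (graph s)) //= eqxx big1 ?addr0; first by case: (Q (graph s)).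
by move=> F; rewrite eq_sym => /negbTE ->; case: (Q F).
Qed.

Lemma model_prob : is_prob model.
Proof.
split=> [F|]; last by rewrite -[\sum_F _]/(Pr model xpredT) Pr_model wexpect1 // vweight_sum1.
rewrite ffunE /wexpect Re_sum; apply: sumr_ge0 => s _.
by rewrite Re_natM; case: ifP => // _; apply: Re_weight_ge0.
Qed.

Lemma model_indep : one_indep model.
Proof.
move=> A B dAB S S'; rewrite !Pr_model.
rewrite (eq_wexpect _
  (h := fun s => (graph s :&: A == S)%:R * (graph s :&: B == S')%:R)); last first.
  by move=> s /=; case: (graph s :&: A == S); rewrite ?mul1r ?mul0r.
rewrite (wexpect_indep vweight_sum1 (D := vspan A)) => [|s t st|s t st].
- rewrite ReM Im_wexpect_flip ?mul0r ?subr0 // => s.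
  by rewrite graph_flip.
- by rewrite (graph_restrict st).
- rewrite (@graph_restrict s t B) // => v vB; apply: st.
  by rewrite inE (disjointFl dAB vB).
Qed.

Lemma model_edge (e : edge T) : Pr model [pred F : {set edge T} | e \in F] = 1 - r ^+ 2 *+ 2.
Proof.
have [x [y [xy ev]]] : exists x y, x != y /\ val e = [set x; y] by apply/cards2P; exact: valP e.
have absent : Pr model [pred F : {set edge T} | e \notin F] = r ^+ 2 *+ 2.
  rewrite Pr_model (eq_wexpect _ (h := fun s => (s x == Some true)%:R * (s y == Some false)%:R
      + (s x == Some false)%:R * (s y == Some true)%:R)); last first.
    move=> s /=; rewrite (in_graph s ev).
    by case: (s x) => [[]|]; case: (s y) => [[]|]; rewrite /= ?mul0r ?mulr0 ?mul1r ?addr0 ?add0r.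
  rewrite wexpectD !wexpect_eval2 ?vweight_sum1 //.
  by rewrite (vweight_opposite true) (vweight_opposite false) /= mulr2n.
have := Pr_predC [pred F : {set edge T} | e \in F] model_prob.
by rewrite absent => ->; rewrite subKr.
Qed.

Variable n : nat.
Hypotheses (n_gt0 : (0 < n)%N) (card_T : #|T| = n.*2).

Definition balanced s :=
  [forall v, s v != None] && (#|[set v | s v == Some true]| == n).

Lemma card_negative s : [forall v, s v != None] ->
  #|[set v | s v == Some false]| = (#|T| - #|[set v | s v == Some true]|)%N.
Proof.
move=> /forallP signed; rewrite cardsCs; congr (_ - _)%N; apply: eq_card => v; rewrite !inE.
by move: (signed v); case: (s v) => [[]|].
Qed.

Lemma comp_size_balanced s x : balanced s -> (comp_size (graph s) x <= n)%N.
Proof.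
case/andP=> /forallP signed /eqP card_pos.
have closed_state : closed (adj (graph s)) [pred y | s y == s x].
  move=> a b; rewrite adj_graph => /andP[_]; rewrite !inE.
  move: (signed a) (signed b); case: (s a) => [u|] //; case: (s b) => [w|] //= _ _.
  by rewrite negbK => /eqP ->.
apply: (@leq_trans #|[set y | s y == s x]|).
  apply/subset_leq_card/subsetP=> y; rewrite !inE => cxy.
  by have := closed_connect closed_state cxy; rewrite !inE eqxx => <-.
move: (signed x); case: (s x) => [[]|] // _; first by rewrite card_pos.
by rewrite card_negative; [rewrite card_pos card_T; lia | apply/forallP].
Qed.

Lemma unbalanced_big_comp s : ~~ balanced s -> exists x, (n < comp_size (graph s) x)%N.
Proof.
have big_class b : (n < #|[set v | s v == Some b]|)%N -> exists x, (n < comp_size (graph s) x)%N.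
  move=> big_b; have [x xb] : exists x, x \in [set v | s v == Some b].
    by apply/set0Pn; rewrite -card_gt0; lia.
  exists x; apply: leq_trans big_b (subset_leq_card _); apply/subsetP=> y.
  by rewrite !inE in xb *; move=> yb; apply: connect_graph; rewrite (eqP xb) (eqP yb) /= eqxx.
case: (boolP [forall v, s v != None]) => [signed|]; last first.
  case/forallPn=> v; rewrite negbK => /eqP neutral; exists v; rewrite /comp_size.
  rewrite (_ : [set y | _] = setT) ?cardsT ?card_T; first lia.
  by apply/setP=> y; rewrite !inE; apply: connect_graph; rewrite neutral.
rewrite /balanced signed /= => unbal.
case: (ltngtP n #|[set v | s v == Some true]|) => [|lt_pos|eq_pos]; first exact: big_class.
  by apply: (big_class false); rewrite card_negative // card_T; lia.
by rewrite eq_pos eqxx in unbal.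
Qed.

Lemma C1size_graph s : (C1size (graph s) <= n)%N = balanced s.
Proof.
case: (boolP (balanced s)) => bal.
  by apply/bigmax_leqP=> x _; apply: comp_size_balanced.
apply/negbTE; rewrite -ltnNge; have [x big_x] := unbalanced_big_comp bal.
exact: leq_trans big_x (leq_bigmax (F := comp_size (graph s)) x).
Qed.

Lemma Re_weight_balanced s : balanced s -> Re (weight vweight s) = r ^+ n.*2.
Proof.
case/andP=> signed /eqP card_pos.
have count (A : {set T}) : \sum_v ((v \in A)%:R : R) = #|A|%:R.
  by rewrite -sum1_card natr_sum [RHS]big_mkcond; apply: eq_bigr => v _; case: (v \in A).
have charge0 : \sum_v charge (s v) = 0.
  transitivity (\sum_v ((v \in [set v | s v == Some true])%:R
                        - (v \in [set v | s v == Some false])%:R : R)).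
    apply: eq_bigr => v _; rewrite !inE; move/forallP: signed => /(_ v).
    by case: (s v) => [[]|]; rewrite /= ?subr0 ?sub0r.
  by rewrite sumrB !count card_negative // card_pos card_T -addnn addnK subrr.
rewrite weight_polar charge0 mulr0 Re_realM Re_expi cos0 mulr1 -card_T -prodr_const.
by apply: eq_bigr => v _; move/forallP: signed => /(_ v); case: (s v).
Qed.

Lemma card_balanced : #|[set s | balanced s]| = 'C(n.*2, n).
Proof.
pose f (A : {set T}) : state := [ffun v => Some (v \in A)].
have f_inj : injective f.
  move=> A B /ffunP fAB; apply/setP=> v.
  by have := fAB v; rewrite !ffunE => -[].
rewrite -card_T -card_draws -(card_imset _ f_inj).
apply: eq_card => s; rewrite inE; apply/idP/imsetP=> [/andP[/forallP signed card_pos]|[A]].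
  exists [set v | s v == Some true]; first by rewrite inE.
  by apply/ffunP=> v; rewrite !ffunE inE; move: (signed v); case: (s v) => [[]|].
rewrite inE => card_A ->; apply/andP; split; first by apply/forallP=> v; rewrite ffunE.
by rewrite (_ : [set v | _] = A) //; apply/setP=> v; rewrite !inE ffunE; case: (v \in A).
Qed.

Lemma model_C1size :
  Pr model [pred F | (n < C1size F)%N] = 1 - 'C(n.*2, n)%:R * r ^+ n.*2.
Proof.
have small : Pr model [pred F : {set edge T} | ~~ (n < C1size F)%N] = 'C(n.*2, n)%:R * r ^+ n.*2.
  rewrite Pr_model (eq_wexpect _ (h := fun s => (balanced s)%:R)); last first.
    by move=> s /=; rewrite -leqNgt C1size_graph.
  rewrite /wexpect Re_sum (eq_bigr _ (fun s _ => Re_natM _ _)) -big_mkcond /=.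
  rewrite (eq_bigr _ (fun s => Re_weight_balanced (s := s))) sumr_const -card_balanced.
  by rewrite mulr_natl cardsE.
by rewrite -small Pr_predC ?subKr //; apply: model_prob.
Qed.

End SignModel.

Lemma threshold_angle (R : realType) n : (0 < n)%N ->
  let th : R := pi / (4 * n)%:R in [/\ 0 <= th, th * n.*2%:R = pi / 2 & 0 < cos th].
Proof.
move=> n_gt0 th; have pi_gt0 := pi_gt0 R.
have n_ge1 : 1 <= n%:R :> R by rewrite ler1n.
have th4n : th * (4 * n%:R) = pi by rewrite /th natrM divfK // mulf_neq0 // pnatr_eq0 -lt0n.
have th_ge0 : 0 <= th by rewrite divr_ge0 ?ler0n // ltW.
split=> //; first by rewrite -mul2n natrM -th4n; field.
by apply: cos_gt0_pihalf; apply/andP; split; nra.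
Qed.

Lemma threshold_modulus (R : realType) (th p r : R) : 0 < cos th -> 0 <= r ->
  r ^+ 2 = (1 - p) / 2 -> (1 - tan th ^+ 2) / 2 <= p -> r * cos th *+ 2 <= 1.
Proof.
move=> cos_gt0 r_ge0 r2 p_ge.
have cos2_sec2 : cos th ^+ 2 * (1 + tan th ^+ 2) = 1.
  by rewrite -cos2_tan2 ?mulfV ?expf_neq0 // gt_eqF.
have rc_ge0 : 0 <= r * cos th by rewrite mulr_ge0 // ltW.
have : (r * cos th) ^+ 2 * 4 <= 1.
  by rewrite exprMn r2; have := sqr_ge0 (cos th); nra.
by rewrite mulr2n; nra.
Qed.

Lemma extremal_model (R : realType) (T : finType) n (p : R) : (0 < n)%N -> #|T| = n.*2 ->
  (1 - tan (pi / (4 * n)%:R) ^+ 2) / 2 <= p -> p <= 1 ->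
  exists mu : {ffun {set edge T} -> R}, M1ge p mu /\
    Pr mu [pred F | (n < C1size F)%N] = 1 - 'C(n.*2, n)%:R * ((1 - p) / 2) ^+ n.
Proof.
move=> n_gt0 card_T p_ge p_le1.
have [th_ge0 th_n2 cos_gt0] := threshold_angle R n_gt0.
set th := pi / _ in p_ge th_ge0 th_n2 cos_gt0 *.
have [r r_ge0 r2] : exists2 r : R, 0 <= r & r ^+ 2 = (1 - p) / 2.
  by exists (Num.sqrt ((1 - p) / 2)); rewrite ?sqrtr_ge0 // sqr_sqrtr //; lra.
have c_ge0 : 0 <= 1 - r * cos th *+ 2 by rewrite subr_ge0; apply: threshold_modulus p_ge.
have rc_sum1 : r * cos th *+ 2 + (1 - r * cos th *+ 2) = 1 by rewrite addrC subrK.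
have th_small : th * #|T|%:R <= pi / 2 by rewrite card_T th_n2.
exists (model T r (1 - r * cos th *+ 2) th); split; first split.
- exact: model_prob.
- exact: model_indep.
- by move=> e; rewrite model_edge // r2 mulr2n; lra.
- by rewrite (model_C1size r_ge0 c_ge0 rc_sum1 th_ge0 th_small n_gt0 card_T) -mul2n exprM r2.
Qed.

Theorem proposition16 (R : realType) (n : nat) (hn : (0 < n)%N) (p : R) :
  (1 - tan (pi / (4 * n)%:R) ^+ 2) / 2 <= p <= 1 ->
  let v := 1 - ('C(2 * n, n))%:R * ((1 - p) / 2) ^+ n in
  (forall mu : {ffun {set edge 'I_(2 * n)} -> R},
     M1ge p mu -> v <= Pr mu [pred F | (n < C1size F)%N]) /\
  (exists mu : {ffun {set edge 'I_(2 * n)} -> R},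
     M1ge p mu /\ Pr mu [pred F | (n < C1size F)%N] = v).
Proof.
move=> /andP[p_ge p_le1] v; rewrite /v [X in 'C(X, _)]mul2n.
have card_I : #|'I_(2 * n)| = n.*2 by rewrite card_ord mul2n.
split=> [mu mu_M1ge|]; first exact: lower_bound mu_M1ge _ card_I.
exact: extremal_model hn card_I p_ge p_le1.
Qed.
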